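(* If a $T_1$-space $X$ has a regular base at non-isolated points, then (1) $X$ is proto-metrizable, and (2) $X$ is a $\gamma$-space.
   Context: $I(X)$ is the set of isolated points, $\mathcal{I}(X)=\{\{x\}:x\in I(X)\}$. A base $\mathcal{B}$ is regular at $x$ if for every neighborhood $U$ of $x$ there is an open $V$ with $x\in V\subset U$ such that $\{B\in\mathcal{B}: B\cap V\neq\emptyset,\ B\not\subset U\}$ is finite; a regular base at non-isolated points is regular at every $x\in X\setminus I(X)$. An ortho-base of $X$ is a base $\mathcal{B}$ such that for every $\mathcal{A}\subset\mathcal{B}$, either $\bigcap\mathcal{A}$ is open in $X$, or $\bigcap\mathcal{A}=\{x\}$ for some $x\notin I(X)$ and $\mathcal{A}$ is a neighborhood base at $x$. $X$ is proto-metrizable if it is (Hausdorff) paracompact and has an ortho-base. A $g$-function assigns to each $n\in\mathbb{N}$, $x\in X$ an open set $g(n,x)\ni x$; $X$ is a $\gamma$-space if there is a $g$-function such that for each $x\in X$ and sequences $\{x_n\},\{y_n\}$ with $x_n\in g(n,y_n)$ and $y_n\in g(n,x)$ for all $n$, we have $x_n\to x$. *)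

From Stdlib Require Import List Classical.

Record topology (X : Type) : Type := Topology {
  is_open : (X -> Prop) -> Prop;
  open_full : is_open (fun _ => True);
  open_inter : forall U V, is_open U -> is_open V -> is_open (fun x => U x /\ V x);
  open_union : forall F : (X -> Prop) -> Prop,
      (forall U, F U -> is_open U) -> is_open (fun x => exists U, F U /\ U x)
}.
Arguments is_open {X} t U.

Section Topo.
Context {X : Type} (T : topology X).

Definition subset (A B : X -> Prop) : Prop := forall x, A x -> B x.

Definition nbhd (x : X) (N : X -> Prop) : Prop :=
  exists U, is_open T U /\ U x /\ subset U N.

Definition finite_family (F : (X -> Prop) -> Prop) : Prop :=
  exists l : list (X -> Prop), forall B, F B -> In B l.

Definition T1 : Prop :=
  forall x y : X, x <> y -> exists U, is_open T U /\ U x /\ ~ U y.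

Definition hausdorff : Prop :=
  forall x y : X, x <> y -> exists U V, is_open T U /\ is_open T V /\ U x /\ V y /\
      (forall z, ~ (U z /\ V z)).

Definition isolated (x : X) : Prop := is_open T (fun y => y = x).

Definition is_base (B : (X -> Prop) -> Prop) : Prop :=
  (forall U, B U -> is_open T U) /\
  (forall U x, is_open T U -> U x -> exists V, B V /\ V x /\ subset V U).

Definition regular_at (B : (X -> Prop) -> Prop) (x : X) : Prop :=
  forall U, nbhd x U -> exists V, is_open T V /\ V x /\ subset V U /\
    finite_family (fun W => B W /\ (exists z, W z /\ V z) /\ ~ subset W U).

Definition regular_base_at_nonisolated (B : (X -> Prop) -> Prop) : Prop :=
  is_base B /\ forall x, ~ isolated x -> regular_at B x.

Definition nbhd_base_at (A : (X -> Prop) -> Prop) (x : X) : Prop :=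
  (forall W, A W -> nbhd x W) /\ (forall U, nbhd x U -> exists W, A W /\ subset W U).

Definition ortho_base (B : (X -> Prop) -> Prop) : Prop :=
  is_base B /\
  forall A : (X -> Prop) -> Prop, (forall W, A W -> B W) ->
    is_open T (fun y => forall W, A W -> W y) \/
    exists x, ~ isolated x /\ (forall y, (forall W, A W -> W y) <-> y = x) /\
              nbhd_base_at A x.

Definition open_cover (C : (X -> Prop) -> Prop) : Prop :=
  (forall U, C U -> is_open T U) /\ (forall x, exists U, C U /\ U x).

Definition locally_finite (R : (X -> Prop) -> Prop) : Prop :=
  forall x, exists V, is_open T V /\ V x /\
    finite_family (fun W => R W /\ exists z, W z /\ V z).

Definition paracompact : Prop :=
  hausdorff /\
  forall C, open_cover C -> exists R, open_cover R /\
    (forall W, R W -> exists U, C U /\ subset W U) /\ locally_finite R.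

Definition proto_metrizable : Prop :=
  paracompact /\ exists B, ortho_base B.

Definition converges (s : nat -> X) (x : X) : Prop :=
  forall U, is_open T U -> U x -> exists N, forall n, N <= n -> U (s n).

Definition g_function (g : nat -> X -> X -> Prop) : Prop :=
  forall n x, is_open T (g n x) /\ g n x x.

Definition gamma_space : Prop :=
  exists g, g_function g /\
    forall (x : X) (xs ys : nat -> X),
      (forall n, g n (ys n) (xs n) /\ g n x (ys n)) -> converges xs x.

End Topo.

From Stdlib Require Import List Classical Lia Arith.
From Stdlib Require Import FunctionalExtensionality PropExtensionality ClassicalEpsilon.

(** Everything
   rests on one finiteness fact: for non-isolated x and a neighbourhood U of
   x, only finitely many members of B contain x without lying in U
   ([protruding_finite]); with U = X \ {y} this bounds the members of B
   through two points ([pair_finite]) and the supersets in B of a member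
   through a non-isolated point ([supersets_finite]).  From it we derive
   - Hausdorffness, and that B itself is an ortho-base;
   - paracompactness: maximal members of B (through non-isolated points)
     refining an open cover, trimmed to where they are locally finite, plus
     the leftover isolated singletons, form a locally finite refinement;
   - the gamma property, using at each non-isolated x a strictly decreasing
     chain in B that is a neighbourhood base at x and in which a given member
     of B occurs only at bounded depth. *)

Lemma set_ext {X : Type} (A A' : X -> Prop) : (forall x, A x <-> A' x) -> A = A'.
Proof.
  intro H. apply functional_extensionality; intro x.
  apply propositional_extensionality; apply H.
Qed.

Lemma finite_family_sub {X : Type} {A' A : (X -> Prop) -> Prop} :
  finite_family A' -> (forall W, A W -> A' W) -> finite_family A.
Proof. intros [l Hl] HA. exists l. intros W HW. apply Hl, HA, HW. Qed.

Lemma maximal_above {A : Type} (P : A -> Prop) (le : A -> A -> Prop) :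
  (forall a, le a a) -> (forall a b c, le a b -> le b c -> le a c) ->
  forall (l : list A) (a : A), P a -> (forall b, P b -> le a b -> In b l) ->
  exists m, P m /\ le a m /\ forall b, P b -> le m b -> le b m.
Proof.
  intros Hrefl Htrans l.
  induction l as [l IH] using (induction_ltof1 _ (@length A)).
  intros a Pa Hl.
  destruct (classic (exists b, P b /\ le a b /\ ~ le b a)) as [[b [Pb [Hab Hba]]]|Hmax].
  - set (eq_dec := fun x y : A => excluded_middle_informative (x = y)).
    destruct (IH (remove eq_dec a l) (remove_length_lt eq_dec l a (Hl a Pa (Hrefl a))) b Pb)
      as [m [Pm [Hbm Hm]]].
    + intros c Pc Hbc. apply in_in_remove.
      * intros ->. exact (Hba Hbc).
      * exact (Hl c Pc (Htrans _ _ _ Hab Hbc)).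
    + exists m. split; [exact Pm|]. split; [exact (Htrans _ _ _ Hab Hbm)| exact Hm].
  - exists a. split; [exact Pa|]. split; [exact (Hrefl a)|].
    intros b Pb Hab. apply NNPP; intro Hba. apply Hmax. exists b; auto.
Qed.

Lemma injective_prefix_length {A : Type} (f : nat -> A) :
  (forall i j, f i = f j -> i = j) ->
  forall (l : list A) (n : nat), (forall k, k <= n -> In (f k) l) -> S n <= length l.
Proof.
  intros Hinj l n Hl.
  assert (Hnd : NoDup (map f (seq 0 (S n)))).
  { apply NoDup_map_NoDup_ForallPairs; [|apply seq_NoDup].
    intros a b _ _ Hab. exact (Hinj a b Hab). }
  pose proof (NoDup_incl_length (l' := l) Hnd) as Hincl.
  rewrite length_map, length_seq in Hincl. apply Hincl.
  intros a Ha. apply in_map_iff in Ha. destruct Ha as [k [<- Hk]].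
  apply in_seq in Hk. apply Hl. lia.
Qed.

Section RegularBase.
Context {X : Type} (T : topology X).

Lemma open_ext (A A' : X -> Prop) :
  is_open T A -> (forall x, A x <-> A' x) -> is_open T A'.
Proof. intros HA H. rewrite <- (set_ext A A' H). exact HA. Qed.

Lemma open_of_local (S : X -> Prop) :
  (forall x, S x -> exists U, is_open T U /\ U x /\ subset U S) -> is_open T S.
Proof.
  intro H. apply (open_ext (fun x => exists U, (is_open T U /\ subset U S) /\ U x)).
  - apply open_union. intros U [HU _]; exact HU.
  - intro x; split.
    + intros [U [[_ HUS] Ux]]. exact (HUS x Ux).
    + intro Sx. destruct (H x Sx) as [U [HU [Ux HUS]]]. exists U; auto.
Qed.

Lemma open_nbhd (x : X) (U : X -> Prop) : is_open T U -> U x -> nbhd T x U.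
Proof. intros HU Ux. exists U. split; [exact HU|]. split; [exact Ux| intros w Hw; exact Hw]. Qed.

Lemma open_finite_inter (A : (X -> Prop) -> Prop) :
  finite_family A -> (forall W, A W -> is_open T W) ->
  is_open T (fun z => forall W, A W -> W z).
Proof.
  intros [l Hl]. revert A Hl. induction l as [|a l IH]; intros A Hl Ho.
  - apply (open_ext (fun _ => True)); [apply open_full|].
    intro z; split; [intros _ W HW; destruct (Hl W HW)| auto].
  - assert (Hrest : is_open T (fun z => forall W, (A W /\ W <> a) -> W z)).
    { apply IH.
      - intros W [HW Hne]. destruct (Hl W HW) as [<-|Hin]; [contradiction| exact Hin].
      - intros W [HW _]. exact (Ho W HW). }
    destruct (classic (A a)) as [Aa|nAa].
    + apply (open_ext (fun z => a z /\ forall W, (A W /\ W <> a) -> W z)).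
      * apply open_inter; [exact (Ho a Aa)| exact Hrest].
      * intro z; split.
        -- intros [az Hz] W HW.
           destruct (classic (W = a)) as [->|Hne]; [exact az| exact (Hz W (conj HW Hne))].
        -- intro Hz. split; [exact (Hz a Aa)| intros W [HW _]; exact (Hz W HW)].
    + apply (open_ext _ _ Hrest). intro z; split.
      * intros Hz W HW. apply Hz. split; [exact HW| intro e; apply nAa; rewrite <- e; exact HW].
      * intros Hz W [HW _]. exact (Hz W HW).
Qed.

Lemma nonisolated_other (x : X) (W : X -> Prop) :
  ~ isolated T x -> is_open T W -> W x -> exists y, W y /\ y <> x.
Proof.
  intros Nx HW Wx. apply NNPP; intro Hno. apply Nx. unfold isolated.
  apply (open_ext W _ HW). intro z; split.
  - intro Wz. apply NNPP; intro Hzx. apply Hno. exists z; auto.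
  - intros ->; exact Wx.
Qed.

Hypothesis HT1 : T1 T.

Lemma open_compl_point (y : X) : is_open T (fun z => z <> y).
Proof.
  apply open_of_local. intros x Hxy.
  destruct (HT1 x y Hxy) as [U [HU [Ux Uy]]].
  exists U. split; [exact HU|]. split; [exact Ux| intros z Uz ->; exact (Uy Uz)].
Qed.

Lemma nbhd_compl_point (x y : X) : x <> y -> nbhd T x (fun z => z <> y).
Proof. intro Hxy. exact (open_nbhd x _ (open_compl_point y) Hxy). Qed.

(** In a T1 space, a point lying in only finitely many members of a base is
    isolated: their intersection is open and equals the singleton. *)
Lemma isolated_of_finite_base (B : (X -> Prop) -> Prop) (y : X) :
  is_base T B -> finite_family (fun W => B W /\ W y) -> isolated T y.
Proof.
  intros [Bo Bb] Hfin. unfold isolated.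
  apply (open_ext (fun v => forall W, (B W /\ W y) -> W v)).
  - apply open_finite_inter; [exact Hfin|]. intros W [BW _]. exact (Bo W BW).
  - intro v; split.
    + intro Hv. apply NNPP; intro Hvy.
      destruct (Bb (fun w => w <> v) y (open_compl_point v) (not_eq_sym Hvy))
        as [W [BW [Wy Wv]]].
      exact (Wv v (Hv W (conj BW Wy)) eq_refl).
    + intros -> W [_ Wy]. exact Wy.
Qed.

(** An isolated point is separated from any other point by {x} and X \ {x}. *)
Lemma isolated_separated (x y : X) : isolated T x -> x <> y ->
  exists U V, is_open T U /\ is_open T V /\ U x /\ V y /\ (forall z, ~ (U z /\ V z)).
Proof.
  intros Ix Hxy. exists (fun z => z = x), (fun z => z <> x).
  split; [exact Ix|]. split; [exact (open_compl_point x)|].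
  split; [reflexivity|]. split; [exact (not_eq_sym Hxy)|].
  intros z [-> Hz]. exact (Hz eq_refl).
Qed.

Variable B : (X -> Prop) -> Prop.
Hypothesis HB : regular_base_at_nonisolated T B.

Lemma base_open (W : X -> Prop) : B W -> is_open T W.
Proof. exact (proj1 (proj1 HB) W). Qed.

Lemma base_refines (U : X -> Prop) (x : X) :
  is_open T U -> U x -> exists W, B W /\ W x /\ subset W U.
Proof. exact (proj2 (proj1 HB) U x). Qed.

Lemma base_regular (x : X) : ~ isolated T x -> regular_at T B x.
Proof. exact (proj2 HB x). Qed.

Lemma protruding_finite (x : X) (U : X -> Prop) : ~ isolated T x -> nbhd T x U ->
  finite_family (fun Z => B Z /\ Z x /\ ~ subset Z U).
Proof.
  intros Nx HU. destruct (base_regular x Nx U HU) as [V [_ [Vx [_ HE]]]].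
  apply (finite_family_sub HE). intros Z [BZ [Zx HZ]].
  split; [exact BZ|]. split; [exists x; auto| exact HZ].
Qed.

Lemma pair_finite (z y : X) : ~ isolated T z -> y <> z ->
  finite_family (fun W => B W /\ W z /\ W y).
Proof.
  intros Nz Hyz.
  apply (finite_family_sub (protruding_finite z _ Nz (nbhd_compl_point z y (not_eq_sym Hyz)))).
  intros W [BW [Wz Wy]]. split; [exact BW|]. split; [exact Wz|].
  intro Hs. exact (Hs y Wy eq_refl).
Qed.

Lemma supersets_finite (Z : X -> Prop) (w : X) : B Z -> Z w -> ~ isolated T w ->
  finite_family (fun W => B W /\ subset Z W).
Proof.
  intros BZ Zw Nw.
  destruct (nonisolated_other w Z Nw (base_open Z BZ) Zw) as [y [Zy Hyw]].
  apply (finite_family_sub (pair_finite w y Nw Hyw)).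
  intros W [BW HZW]. split; [exact BW|]. split; [exact (HZW w Zw)| exact (HZW y Zy)].
Qed.

(** Distinct non-isolated x, y: regularity at x for X \ {y} gives V; if every
    member of B through y met V, the point y would be isolated. *)
Lemma regular_hausdorff : hausdorff T.
Proof.
  intros x y Hxy.
  destruct (classic (isolated T x)) as [Ix|Nx]; [exact (isolated_separated x y Ix Hxy)|].
  destruct (classic (isolated T y)) as [Iy|Ny].
  { destruct (isolated_separated y x Iy (not_eq_sym Hxy)) as [U [V [HU [HV [Uy [Vx HUV]]]]]].
    exists V, U. split; [exact HV|]. split; [exact HU|]. split; [exact Vx|]. split; [exact Uy|].
    intros z [Vz Uz]. exact (HUV z (conj Uz Vz)). }
  destruct (base_regular x Nx _ (nbhd_compl_point x y Hxy)) as [V [HV [Vx [_ HE]]]].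
  destruct (classic (exists W, B W /\ W y /\ ~ exists z, W z /\ V z))
    as [[W [BW [Wy HWV]]]|Hmeet].
  - exists V, W. split; [exact HV|]. split; [exact (base_open W BW)|].
    split; [exact Vx|]. split; [exact Wy|].
    intros z [Vz Wz]. apply HWV. exists z; auto.
  - exfalso. apply Ny. apply (isolated_of_finite_base B y (proj1 HB)).
    apply (finite_family_sub HE). intros W [BW Wy].
    split; [exact BW|]. split.
    + apply NNPP; intro Hn. apply Hmeet. exists W; auto.
    + intro Hs. exact (Hs y Wy eq_refl).
Qed.

(** B is an ortho-base: an infinite subfamily A whose intersection contains a
    non-isolated z has intersection {z} (by [pair_finite]) and is a
    neighbourhood base at z (by [protruding_finite]). *)
Lemma regular_ortho_base : ortho_base T B.
Proof.
  split; [exact (proj1 HB)|]. intros A HAB.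
  destruct (classic (finite_family A)) as [Afin|Ainf].
  { left. apply open_finite_inter; [exact Afin|]. intros W HW. exact (base_open W (HAB W HW)). }
  destruct (classic (forall z, (forall W, A W -> W z) -> isolated T z)) as [Hiso|Hz].
  { left. apply open_of_local. intros z Iz. exists (fun y => y = z).
    split; [exact (Hiso z Iz)|]. split; [reflexivity| intros y ->; exact Iz]. }
  apply not_all_ex_not in Hz. destruct Hz as [z Hz].
  apply imply_to_and in Hz. destruct Hz as [Iz Nz].
  right. exists z. split; [exact Nz|]. split.
  - intro y; split; [|intros ->; exact Iz].
    intro Iy. apply NNPP; intro Hyz. apply Ainf.
    apply (finite_family_sub (pair_finite z y Nz Hyz)). intros W HW.
    split; [exact (HAB W HW)|]. split; [exact (Iz W HW)| exact (Iy W HW)].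
  - split.
    + intros W HW. exact (open_nbhd z W (base_open W (HAB W HW)) (Iz W HW)).
    + intros U HU. apply NNPP; intro Hno. apply Ainf.
      apply (finite_family_sub (protruding_finite z U Nz HU)). intros W HW.
      split; [exact (HAB W HW)|]. split; [exact (Iz W HW)|].
      intro HWU. apply Hno. exists W; auto.
Qed.

Section Paracompact.
Variable C : (X -> Prop) -> Prop.
Hypothesis HC : open_cover T C.

Definition piece (W : X -> Prop) : Prop :=
  B W /\ (exists y, W y /\ ~ isolated T y) /\ exists U, C U /\ subset W U.

Definition maximal_piece (M : X -> Prop) : Prop :=
  piece M /\ forall M', piece M' -> subset M M' -> M' = M.

Definition pieces_finite_near (z : X) : Prop :=
  exists V, is_open T V /\ V z /\
    finite_family (fun M => maximal_piece M /\ exists w, M w /\ V w).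

Definition trim (M : X -> Prop) : X -> Prop := fun y => M y /\ pieces_finite_near y.

Definition covered (z : X) : Prop := exists M, maximal_piece M /\ trim M z.

Definition refinement (W : X -> Prop) : Prop :=
  (exists M, maximal_piece M /\ W = trim M) \/
  (exists x, isolated T x /\ ~ covered x /\ W = (fun y => y = x)).

(** Every piece lies in a maximal one, since it has finitely many supersets in B. *)
Lemma maximal_piece_above (W : X -> Prop) : piece W -> exists M, maximal_piece M /\ subset W M.
Proof.
  intro HW. pose proof HW as [BW [[w [Ww Nw]] _]].
  destruct (supersets_finite W w BW Ww Nw) as [l Hl].
  destruct (maximal_above piece subset (fun a x h => h)
              (fun a b c h1 h2 x hx => h2 x (h1 x hx)) l W HW) as [M [PM [HWM HM]]].
  { intros W' [BW' _] HWW'. apply Hl. split; assumption. }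
  exists M. split; [|exact HWM]. split; [exact PM|].
  intros M' PM' HMM'. apply set_ext. intro x; split; [apply (HM M' PM' HMM')| apply HMM'].
Qed.

Lemma nonisolated_in_maximal_piece (z : X) : ~ isolated T z ->
  exists M, maximal_piece M /\ M z.
Proof.
  intro Nz. destruct HC as [HCo HCc]. destruct (HCc z) as [U [CU Uz]].
  destruct (base_refines U z (HCo U CU) Uz) as [W [BW [Wz WU]]].
  destruct (maximal_piece_above W) as [M [HM HWM]].
  - split; [exact BW|]. split; [exists z; auto| exists U; auto].
  - exists M. split; [exact HM| exact (HWM z Wz)].
Qed.

(** At a non-isolated z inside a maximal piece M0, regularity for M0 bounds
    the maximal pieces near z: they are M0 or stick out of M0. *)
Lemma nonisolated_pieces_finite_near (z : X) : ~ isolated T z -> pieces_finite_near z.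
Proof.
  intro Nz. destruct (nonisolated_in_maximal_piece z Nz) as [M0 [[PM0 M0max] M0z]].
  destruct (base_regular z Nz M0 (open_nbhd z M0 (base_open M0 (proj1 PM0)) M0z))
    as [V [HV [Vz [_ [l Hl]]]]].
  exists V. split; [exact HV|]. split; [exact Vz|].
  exists (M0 :: l). intros M [[PM HMmax] HMV].
  destruct (classic (subset M M0)) as [HS|HS].
  - left. exact (HMmax M0 PM0 HS).
  - right. apply Hl. split; [exact (proj1 PM)|]. split; [exact HMV| exact HS].
Qed.

Lemma pieces_finite_near_open : is_open T pieces_finite_near.
Proof.
  apply open_of_local. intros z [V [HV [Vz HF]]].
  exists V. split; [exact HV|]. split; [exact Vz|].
  intros w Vw. exists V. auto.
Qed.

Lemma uncovered_isolated (z : X) : ~ covered z -> isolated T z.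
Proof.
  intro Hz. apply NNPP; intro Nz. apply Hz.
  destruct (nonisolated_in_maximal_piece z Nz) as [M [HM Mz]].
  exists M. split; [exact HM|]. split; [exact Mz| exact (nonisolated_pieces_finite_near z Nz)].
Qed.

Lemma refinement_open_cover : open_cover T refinement.
Proof.
  split.
  - intros W [[M [[[BM _] _] ->]]|[x [Ix [_ ->]]]]; [|exact Ix].
    unfold trim. apply open_inter; [exact (base_open M BM)| exact pieces_finite_near_open].
  - intro z. destruct (classic (covered z)) as [[M [HM Mz]]|Hz].
    + exists (trim M). split; [left; exists M; auto| exact Mz].
    + exists (fun y => y = z). split; [|reflexivity].
      right. exists z. split; [exact (uncovered_isolated z Hz)|]. auto.
Qed.

Lemma refinement_refines (W : X -> Prop) : refinement W -> exists U, C U /\ subset W U.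
Proof.
  intros [[M [[[_ [_ [U [CU HMU]]]] _] ->]]|[x [_ [_ ->]]]].
  - exists U. split; [exact CU|]. intros y [My _]. exact (HMU y My).
  - destruct (proj2 HC x) as [U [CU Ux]]. exists U. split; [exact CU|]. intros y ->; exact Ux.
Qed.

(** Near a covered point z, inside trim M0 where M0 is a maximal piece
    through z, only finitely many trimmed pieces and no singleton occur;
    an uncovered point is isolated and meets only its own singleton. *)
Lemma refinement_locally_finite : locally_finite T refinement.
Proof.
  intro z. destruct (classic (covered z)) as [[M0 [HM0 [M0z Hnear]]]|Hz].
  - pose proof HM0 as [[BM0 _] _]. pose proof Hnear as [V0 [HV0 [V0z [l Hl]]]].
    exists (fun w => V0 w /\ trim M0 w). split.
    { apply open_inter; [exact HV0|]. unfold trim.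
      apply open_inter; [exact (base_open M0 BM0)| exact pieces_finite_near_open]. }
    split; [split; [exact V0z| split; assumption]|].
    exists (map trim l). intros W [[[M [HM ->]]|[x [_ [Hx ->]]]] [w [Ww [V0w M0w]]]].
    + apply in_map, Hl. split; [exact HM|]. exists w. split; [exact (proj1 Ww)| exact V0w].
    + exfalso. apply Hx. exists M0. split; [exact HM0|]. rewrite <- Ww. exact M0w.
  - exists (fun w => w = z). split; [exact (uncovered_isolated z Hz)|]. split; [reflexivity|].
    exists ((fun y => y = z) :: nil).
    intros W [[[M [HM ->]]|[x [_ [_ ->]]]] [w [Ww ->]]].
    + exfalso. apply Hz. exists M. split; assumption.
    + left. subst. reflexivity.
Qed.

End Paracompact.

Lemma regular_paracompact : paracompact T.
Proof.
  split; [exact regular_hausdorff|].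
  intros C HC. exists (refinement C). split; [exact (refinement_open_cover C HC)|].
  split; [exact (refinement_refines C HC)| exact (refinement_locally_finite C HC)].
Qed.

Section Gamma.

Definition successor (x : X) (W W' : X -> Prop) : Prop :=
  B W' /\ W' x /\ subset W' W /\ ~ subset W W' /\
  forall Z, B Z -> Z x -> subset Z W \/ subset W' Z.

(** Choose W' inside W, avoiding some y in W \ {x}, and inside each of the
    finitely many members of B through x that stick out of W. *)
Lemma successor_exists (x : X) (W : X -> Prop) : ~ isolated T x -> B W -> W x ->
  exists W', successor x W W'.
Proof.
  intros Nx BW Wx.
  pose proof (protruding_finite x W Nx (open_nbhd x W (base_open W BW) Wx)) as Hfin.
  destruct (nonisolated_other x W Nx (base_open W BW) Wx) as [y [Wy Hyx]].
  set (S := fun z => W z /\ z <> y /\ forall Z, (B Z /\ Z x /\ ~ subset Z W) -> Z z).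
  assert (HS : is_open T S).
  { apply open_inter; [exact (base_open W BW)|]. apply open_inter; [exact (open_compl_point y)|].
    apply open_finite_inter; [exact Hfin|]. intros Z [BZ _]. exact (base_open Z BZ). }
  assert (Sx : S x).
  { split; [exact Wx|]. split; [exact (not_eq_sym Hyx)|]. intros Z [_ [Zx _]]. exact Zx. }
  destruct (base_refines S x HS Sx) as [W' [BW' [W'x W'S]]].
  exists W'. split; [exact BW'|]. split; [exact W'x|]. split.
  { intros w Hw. exact (proj1 (W'S w Hw)). }
  split.
  { intro HWW'. exact (proj1 (proj2 (W'S y (HWW' y Wy))) eq_refl). }
  intros Z BZ Zx. destruct (classic (subset Z W)) as [HZ|HZ]; [left; exact HZ| right].
  intros w Hw. apply (proj2 (proj2 (W'S w Hw))). auto.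
Qed.

Definition next_set (x : X) (W : X -> Prop) : X -> Prop :=
  epsilon (inhabits W) (successor x W).

Definition first_set (x : X) : X -> Prop :=
  epsilon (inhabits (fun _ : X => True)) (fun W => B W /\ W x).

Definition chain (x : X) (n : nat) : X -> Prop := Nat.iter n (next_set x) (first_set x).

Lemma next_set_spec (x : X) (W : X -> Prop) : ~ isolated T x -> B W -> W x ->
  successor x W (next_set x W).
Proof. intros Nx BW Wx. unfold next_set. apply epsilon_spec. exact (successor_exists x W Nx BW Wx). Qed.

Lemma chain_mem (x : X) : ~ isolated T x -> forall n, B (chain x n) /\ chain x n x.
Proof.
  intros Nx n. induction n as [|n [Bn xn]].
  - unfold chain, first_set; simpl. apply epsilon_spec.
    destruct (base_refines (fun _ => True) x (open_full _ T) I) as [W [BW [Wx _]]].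
    exists W. auto.
  - destruct (next_set_spec x (chain x n) Nx Bn xn) as [BS [xS _]]. auto.
Qed.

Lemma chain_successor (x : X) : ~ isolated T x -> forall n,
  successor x (chain x n) (chain x (S n)).
Proof.
  intros Nx n. destruct (chain_mem x Nx n) as [Bn xn]. exact (next_set_spec x _ Nx Bn xn).
Qed.

Lemma chain_decreasing (x : X) : ~ isolated T x -> forall i j, i <= j ->
  subset (chain x j) (chain x i).
Proof.
  intros Nx i j Hij. induction Hij as [|j Hij IH]; intros w Hw; [exact Hw|].
  apply IH. destruct (chain_successor x Nx j) as [_ [_ [Hsub _]]]. exact (Hsub w Hw).
Qed.

Lemma chain_injective (x : X) : ~ isolated T x -> forall i j, chain x i = chain x j -> i = j.
Proof.
  intro Nx.
  assert (Hstrict : forall i j, i < j -> chain x i <> chain x j).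
  { intros i j Hij He. destruct (chain_successor x Nx i) as [_ [_ [_ [Hnot _]]]].
    apply Hnot. rewrite He. exact (chain_decreasing x Nx (S i) j Hij). }
  intros i j He. destruct (Nat.lt_total i j) as [h|[h|h]]; [| exact h |].
  - exfalso. exact (Hstrict i j h He).
  - exfalso. exact (Hstrict j i h (eq_sym He)).
Qed.

(** The chain at a non-isolated x is a neighbourhood base at x: otherwise a
    member W of B through x would lie in every chain element, so infinitely
    many members of B would contain x and another point of W. *)
Lemma chain_nbhd_base (x : X) : ~ isolated T x -> forall O, is_open T O -> O x ->
  exists k, subset (chain x k) O.
Proof.
  intros Nx O HO Ox. destruct (base_refines O x HO Ox) as [W [BW [Wx WO]]].
  destruct (classic (exists k, subset (chain x (S k)) W)) as [[k Hk]|Hno].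
  { exists (S k). intros w Hw. exact (WO w (Hk w Hw)). }
  exfalso.
  assert (HW : forall k, subset W (chain x k)).
  { intro k. destruct (chain_successor x Nx k) as [_ [_ [_ [_ Hdich]]]].
    destruct (Hdich W BW Wx) as [h|h]; [exact h| exfalso; apply Hno; exists k; exact h]. }
  destruct (nonisolated_other x W Nx (base_open W BW) Wx) as [y [Wy Hyx]].
  destruct (pair_finite x y Nx Hyx) as [l Hl].
  assert (Hlen : S (length l) <= length l); [|lia].
  apply (injective_prefix_length (chain x) (chain_injective x Nx) l). intros k _.
  apply Hl. destruct (chain_mem x Nx k) as [Bk xk].
  split; [exact Bk|]. split; [exact xk| exact (HW k y Wy)].
Qed.

(** A member Z of B occurs in the chains only at bounded depth, since the
    chain elements above Z are distinct supersets of Z in B. *)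
Lemma chain_eventually_avoids_set (Z : X -> Prop) :
  exists N, forall n y, N <= n -> ~ isolated T y -> chain y n <> Z.
Proof.
  destruct (classic (exists w, B Z /\ Z w /\ ~ isolated T w)) as [[w [BZ [Zw Nw]]]|Hno].
  - destruct (supersets_finite Z w BZ Zw Nw) as [l Hl].
    exists (length l). intros n y Hn Ny HZ.
    assert (Hlen : S n <= length l); [|lia].
    apply (injective_prefix_length (chain y) (chain_injective y Ny) l n).
    intros k Hk. apply Hl. split; [exact (proj1 (chain_mem y Ny k))|].
    rewrite <- HZ. exact (chain_decreasing y Ny k n Hk).
  - exists 0. intros n y _ Ny HZ. apply Hno. exists y.
    rewrite <- HZ. destruct (chain_mem y Ny n). auto.
Qed.

Lemma chain_eventually_avoids (E : list (X -> Prop)) :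
  exists N, forall n y, N <= n -> ~ isolated T y -> ~ In (chain y n) E.
Proof.
  induction E as [|Z E [N IH]].
  - exists 0. intros n y _ _ [].
  - destruct (chain_eventually_avoids_set Z) as [N1 HN1].
    exists (Nat.max N N1). intros n y Hle Ny [He|He].
    + exact (HN1 n y ltac:(lia) Ny (eq_sym He)).
    + exact (IH n y ltac:(lia) Ny He).
Qed.

Definition gfun (n : nat) (x : X) : X -> Prop :=
  fun z => (isolated T x /\ z = x) \/ (~ isolated T x /\ chain x n z).

Lemma gfun_g_function : g_function T gfun.
Proof.
  intros n x. destruct (classic (isolated T x)) as [Ix|Nx].
  - split; [|left; auto]. apply (open_ext _ _ Ix).
    intro z; split; [left; auto| intros [[_ e]|[Nx _]]; [exact e| contradiction]].
  - split; [|right; split; [exact Nx| exact (proj2 (chain_mem x Nx n))]].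
    apply (open_ext _ _ (base_open _ (proj1 (chain_mem x Nx n)))).
    intro z; split; [right; auto| intros [[Ix _]|[_ h]]; [contradiction| exact h]].
Qed.

(** Convergence: for O a neighbourhood of x, regularity gives V and a finite
    list E; eventually y_n lies in V, and g(n, y_n) is not in E, so it lies
    in O. *)
Lemma gfun_convergence (x : X) (xs ys : nat -> X) :
  (forall n, gfun n (ys n) (xs n) /\ gfun n x (ys n)) -> converges T xs x.
Proof.
  intros Hseq O HO Ox. destruct (classic (isolated T x)) as [Ix|Nx].
  - exists 0. intros n _. destruct (Hseq n) as [Hxs Hys].
    destruct Hys as [[_ Hy]|[Nx _]]; [rewrite Hy in Hxs| contradiction].
    destruct Hxs as [[_ ->]|[Nx _]]; [exact Ox| contradiction].
  - destruct (base_regular x Nx O (open_nbhd x O HO Ox)) as [V [HV [Vx [VO [E HE]]]]].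
    destruct (chain_nbhd_base x Nx V HV Vx) as [k Hk].
    destruct (chain_eventually_avoids E) as [N HN].
    exists (Nat.max k N). intros n Hn. destruct (Hseq n) as [Hxs Hys].
    assert (Vy : V (ys n)).
    { destruct Hys as [[Ix _]|[_ Hy]]; [contradiction|].
      apply Hk. exact (chain_decreasing x Nx k n ltac:(lia) _ Hy). }
    destruct Hxs as [[_ ->]|[Ny Hx]]; [exact (VO _ Vy)|].
    apply NNPP; intro HOx. apply (HN n (ys n) ltac:(lia) Ny). apply HE.
    destruct (chain_mem (ys n) Ny n) as [Bc yc].
    split; [exact Bc|]. split; [exists (ys n); auto|].
    intro Hs. exact (HOx (Hs _ Hx)).
Qed.

End Gamma.

Lemma regular_gamma_space : gamma_space T.
Proof. exists gfun. split; [exact gfun_g_function| exact gfun_convergence]. Qed.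

End RegularBase.

Theorem mainTheorem14 (X : Type) (T : topology X) :
  T1 T ->
  (exists B, regular_base_at_nonisolated T B) ->
  proto_metrizable T /\ gamma_space T.
Proof.
  intros HT1 [B HB]. split.
  - split; [exact (regular_paracompact T HT1 B HB)|].
    exists B. exact (regular_ortho_base T HT1 B HB).
  - exact (regular_gamma_space T HT1 B HB).
Qed.
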